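(* A quantum graph $\mathcal{S} \subseteq M_n$ is connected if and only if $\sum_{i\neq j} \dim\big[P_j \mathcal{S} P_i\big] \ge 2(m-1)$ whenever $m\in\mathbb{N}$ and $P_1,\dots,P_m\in M_n$ are nontrivial, mutually disjoint projections with $P_1+\dots+P_m=I_n$.
   Context: $M_n$ denotes the $n\times n$ complex matrices, $I_n$ the identity. A projection is $P$ with $P=P^2=P^\dagger$; it is nontrivial if $P\neq 0$ and $P\neq I_n$; projections $P,Q$ are disjoint if $PQ=0$. A quantum graph on $M_n$ is a linear subspace $\mathcal{S}\subseteq M_n$ closed under adjoints and containing $I_n$. $P\mathcal{S}Q=\{PAQ: A\in\mathcal{S}\}$, a linear subspace. For subspaces, $\mathcal{U}\mathcal{V}=\operatorname{span}\{UV: U\in\mathcal{U},V\in\mathcal{V}\}$, $\mathcal{U}^0=\mathbb{C}I_n$, $\mathcal{U}^{k+1}=\mathcal{U}^k\mathcal{U}$. $\mathcal{S}$ is connected if $\mathcal{S}^m=M_n$ for some $m\in\mathbb{N}$. *)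

From HB Require Import structures.
From mathcomp Require Import all_boot all_order all_algebra all_field.
From mathcomp Require Import reals complex.
Set Implicit Arguments. Unset Strict Implicit. Unset Printing Implicit Defensive.
Import Order.TTheory GRing.Theory Num.Theory.
Local Open Scope ring_scope.

Definition mxadj {C : numClosedFieldType} {m n : nat} (A : 'M[C]_(m, n)) : 'M[C]_(n, m) :=
  (map_mx Num.conj A)^T.

Definition is_projection {C : numClosedFieldType} {n : nat} (P : 'M[C]_n) : Prop :=
  P *m P = P /\ mxadj P = P.

Definition nontrivial_projection {C : numClosedFieldType} {n : nat} (P : 'M[C]_n) : Prop :=
  is_projection P /\ P <> 0 /\ P <> 1%:M.

Definition quantum_graph {C : numClosedFieldType} {n : nat} (S : {vspace 'M[C]_n.+1}) : Prop :=
  (1%:M \in S) /\ (forall A, A \in S -> mxadj A \in S).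

Definition compress {C : numClosedFieldType} {n : nat} (P : 'M[C]_n.+1)
  (S : {vspace 'M[C]_n.+1}) (Q : 'M[C]_n.+1) : {vspace 'M[C]_n.+1} :=
  (linfun (fun A : 'M[C]_n.+1 => P *m A *m Q) @: S)%VS.

(* Connected: S^m = M_n for some m, with S^0 = C I and S^(k+1) = S^k S
   (falgebra's (U ^+ k)%VS, with U ^+ 0 = 1%VS = span of the identity). *)
Definition qconnected {C : numClosedFieldType} {n : nat} (S : {vspace 'M[C]_n.+1}) : Prop :=
  exists m : nat, (S ^+ m)%VS = fullv.

From HB Require Import structures.
From mathcomp Require Import all_boot all_order all_algebra all_field.
From mathcomp Require Import reals complex spectral.
From Stdlib Require Import Classical_Prop.

(* Call blocks i and j adjacent when P_j S P_i <> 0; since S = S^dagger this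
   relation is symmetric.  If S is connected, no cut {K, K^c} of the blocks can be
   uncrossed: otherwise Q = sum_{i in K} P_i satisfies Q S (I - Q) = 0 = (I - Q) S Q,
   so Q commutes with S, with all its powers and hence with M_n, which is absurd as
   P_i Y P_j <> 0 for suitable Y.  A graph on m vertices crossing every cut has at
   least m - 1 edges, and each edge is counted twice in the sum.
   Conversely, since I is in S the powers S^k increase to the *-algebra A generated
   by S.  If A <> M_n, Burnside's theorem yields v <> 0 whose orbit vA is a proper
   A-invariant subspace; the orthogonal projection Q onto it commutes with A, so the
   partition (Q, I - Q) has zero off-diagonal blocks and the sum is 0 < 2. *)

Set Implicit Arguments. Unset Strict Implicit. Unset Printing Implicit Defensive.
Import Order.TTheory GRing.Theory Num.Theory.
Local Open Scope ring_scope.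

Section Adjoint.
Variable C : numClosedFieldType.

Fact mxadj_is_nmod_morphism m n : nmod_morphism (@mxadj C m n).
Proof. by split=> [|A B]; apply/matrixP => i j; rewrite !mxE ?rmorph0 ?rmorphD. Qed.
HB.instance Definition _ m n := GRing.isNmodMorphism.Build 'M[C]_(m, n) 'M[C]_(n, m)
  (@mxadj C m n) (mxadj_is_nmod_morphism m n).

Lemma mxadjM m n p (A : 'M[C]_(m, n)) (B : 'M[C]_(n, p)) :
  mxadj (A *m B) = mxadj B *m mxadj A.
Proof. by rewrite /mxadj map_mxM trmx_mul. Qed.

Lemma mxadjK m n (A : 'M[C]_(m, n)) : mxadj (mxadj A) = A.
Proof. by apply/matrixP => i j; rewrite !mxE conjCK. Qed.

Lemma mxadjZ m n a (A : 'M[C]_(m, n)) : mxadj (a *: A) = a^* *: mxadj A.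
Proof. by apply/matrixP => i j; rewrite !mxE rmorphM. Qed.

Lemma mxadj1 n : mxadj (1%:M : 'M[C]_n) = 1%:M.
Proof. by apply/matrixP => i j; rewrite !mxE rmorph_nat eq_sym. Qed.

Lemma mxadj_eq0 m n (A : 'M[C]_(m, n)) : (mxadj A == 0) = (A == 0).
Proof. by rewrite -(inj_eq (can_inj (@mxadjK n m))) mxadjK raddf0. Qed.

Lemma projectionN1 n (Q : 'M[C]_n) : is_projection Q -> is_projection (1%:M - Q).
Proof.
move=> [QQ Qadj]; split; last by rewrite raddfB /= mxadj1 Qadj.
by rewrite mulmxBl mul1mx mulmxBr mulmx1 QQ subrr subr0.
Qed.

End Adjoint.

Lemma mulmx_sandwich_neq0 (R : idomainType) m n p q (X : 'M[R]_(m, n)) (Y : 'M[R]_(p, q)) :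
  X != 0 -> Y != 0 -> exists B : 'M_(n, p), X *m B *m Y != 0.
Proof.
move=> /matrix0Pn[a [b Xab]] /matrix0Pn[c [d Ycd]].
exists (delta_mx b c); apply/matrix0Pn; exists a, d.
rewrite -(mul_delta_mx (0 : 'I_1)) mulmxA -colE -mulmxA -rowE !mxE big_ord1 !mxE.
by rewrite mulf_neq0.
Qed.

Section CutCounting.
Variables (m : nat) (r : rel 'I_m).
Hypothesis r_sym : symmetric r.
Hypothesis r_cut : forall K : {set 'I_m}, K != set0 -> K != setT ->
  exists2 i, i \in K & exists2 j, j \notin K & r i j.

Definition inner_edges (K : {set 'I_m}) :=
  (\sum_(a in K) \sum_(b in K) ((a != b) && r a b))%N.

Lemma inner_edges_setU1 (K : {set 'I_m}) i j :
  i \in K -> j \notin K -> r i j -> (inner_edges K + 2 <= inner_edges (j |: K))%N.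
Proof.
move=> iK jK rij; have ij : i != j by apply: contraNneq jK => <-.
rewrite /inner_edges big_setU1 //= big_setU1 //= eqxx /=.
under [X in (_ <= _ + X)%N]eq_bigr => a _ do rewrite big_setU1 //=.
rewrite big_split /= add0n.
have out_j : (1 <= \sum_(b in K) ((j != b) && r j b))%N.
  by rewrite (bigD1 i) //= eq_sym ij r_sym rij.
have in_j : (1 <= \sum_(a in K) ((a != j) && r a j))%N.
  by rewrite (bigD1 i) //= ij rij.
by rewrite addnA [X in (_ <= X)%N]addnC leq_add2l (leq_add out_j in_j).
Qed.

Lemma inner_edges_grow t : (t < m)%N ->
  exists2 K : {set 'I_m}, #|K| = t.+1 & (2 * t <= inner_edges K)%N.
Proof.
elim: t => [|t IH] ltm; first by exists [set Ordinal ltm]; rewrite ?cards1.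
have [K cardK innerK] := IH (ltnW ltm).
have K0 : K != set0 by rewrite -card_gt0 cardK.
have KT : K != setT.
  by apply/eqP => KT; move: ltm; rewrite -cardK KT cardsT card_ord ltnn.
have [i iK [j jK rij]] := r_cut K0 KT.
exists (j |: K); first by rewrite cardsU1 jK cardK.
rewrite mulnS addnC; apply: leq_trans (inner_edges_setU1 iK jK rij).
by rewrite leq_add2r.
Qed.

Lemma cut_connected_edges : (2 * (m - 1) <= \sum_i \sum_(j | i != j) r i j)%N.
Proof.
case: (posnP m) => [m0 | m_gt0]; first by rewrite [in X in (X <= _)%N]m0.
have lt_pred : (m.-1 < m)%N by rewrite ltn_predL.
have [K cardK innerK] := inner_edges_grow lt_pred.
have KT : K = setT.
  by apply/eqP; rewrite eqEcard subsetT cardsT card_ord cardK (prednK m_gt0) leqnn.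
rewrite subn1 (leq_trans innerK) // KT /inner_edges.
apply/eq_leq/eq_big => [a | a _]; first by rewrite in_setT.
rewrite [RHS]big_mkcond; apply: eq_big => [b | b _]; first by rewrite in_setT.
by case: (a != b).
Qed.

End CutCounting.

Section GeneratedAlgebra.
Variables (K : fieldType) (aT : falgType K) (U : {vspace aT}).
Hypothesis U1 : 1 \in U.

Lemma expv_leq i j : (i <= j)%N -> (U ^+ i <= U ^+ j)%VS.
Proof.
move=> /subnKC <-; rewrite expvD -{1}[(U ^+ i)%VS]prodv1 prodvSr //.
by rewrite -(expv1n _ (j - i)) expvS // -memvE.
Qed.

Lemma agenv_expv : agenv U = (U ^+ (\dim {:aT}).-1)%VS.
Proof.
apply/eqP; rewrite eqEsubv subX_agenv andbT; apply/subv_sumP => i _.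
by apply: expv_leq; rewrite -ltnS prednK ?adim_gt0.
Qed.

End GeneratedAlgebra.

Section MatrixSpaces.
Variables (C : numClosedFieldType) (n : nat).
Implicit Types (S U V : {vspace 'M[C]_n.+1}) (P Q A B : 'M[C]_n.+1).

Lemma span_adj (X : seq 'M[C]_n.+1) V :
  {in X, forall x, mxadj x \in V} -> {in <<X>>%VS, forall x, mxadj x \in V}.
Proof.
move=> XV x /(@coord_span _ _ _ (in_tuple X)) ->.
rewrite raddf_sum; apply: memv_suml => i _.
by rewrite /= mxadjZ memvZ // XV // mem_nth.
Qed.

Lemma prodv_adj U V U' V' :
  {in U, forall u, mxadj u \in U'} -> {in V, forall v, mxadj v \in V'} ->
  {in (U * V)%VS, forall x, mxadj x \in (V' * U')%VS}.
Proof.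
move=> UU' VV' x; rewrite {1}unlock.
apply: span_adj => _ /allpairsP[[u v] /= [uU vV ->]].
by rewrite -mulmxE mxadjM memv_mul ?VV' ?UU' ?vbasis_mem.
Qed.

Lemma expv_adj S k : {in S, forall A, mxadj A \in S} ->
  {in (S ^+ k)%VS, forall A, mxadj A \in (S ^+ k)%VS}.
Proof.
move=> Sadj; elim: k => [|k IHk] A.
  by rewrite expv0 => /vlineP[c ->]; rewrite mxadjZ mxadj1 memvZ ?memv_line.
by rewrite {1}expvSr expvSl; apply: prodv_adj.
Qed.

Lemma agenv_cent1 S Q : (S <= 'C[Q] -> agenv S <= 'C[Q])%VS.
Proof.
move=> SQ; apply: agenv_sub_modl; first by rewrite -memvE cent1v1.
exact: prodv_sub.
Qed.

Lemma compressP P S Q B :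
  reflect (exists2 A, A \in S & B = P *m A *m Q) (B \in compress P S Q).
Proof.
have fE A : linfun (fun A : 'M[C]_n.+1 => P *m A *m Q) A = P *m A *m Q.
  exact: (lfunE (mulmxr Q \o mulmx P)).
by apply: (iffP memv_imgP) => -[A AS ->]; exists A; rewrite ?fE.
Qed.

Lemma compress_eq0P P S Q :
  reflect {in S, forall A, P *m A *m Q = 0} (compress P S Q == 0%VS).
Proof.
apply: (iffP eqP) => [S0 A AS | S0].
  by apply/eqP; rewrite -memv0 -S0; apply/compressP; exists A.
by apply/vspaceP => B; rewrite memv0; apply/compressP/eqP => [[A AS ->] | ->];
  [rewrite S0 | exists 0; rewrite ?mem0v ?mulmx0 ?mul0mx].
Qed.

Lemma compress_adj_eq0 S P Q : {in S, forall A, mxadj A \in S} ->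
  mxadj P = P -> mxadj Q = Q -> compress P S Q == 0%VS -> compress Q S P == 0%VS.
Proof.
move=> Sadj Padj Qadj /compress_eq0P PSQ; apply/compress_eq0P => A AS.
by rewrite -[A]mxadjK -Padj -Qadj -!mxadjM mulmxA PSQ ?raddf0 ?Sadj.
Qed.

Lemma qconnectedE S : 1%:M \in S -> qconnected S <-> agenv S = fullv.
Proof.
move=> S1; split=> [[k Sk] | Sfull].
  by apply/eqP; rewrite eqEsubv subvf -Sk subX_agenv.
by exists (\dim {:'M[C]_n.+1}).-1; rewrite -agenv_expv.
Qed.

End MatrixSpaces.

Section ConnectedPartition.
Variables (C : numClosedFieldType) (n m : nat) (S : {vspace 'M[C]_n.+1}).
Variable P : 'I_m -> 'M[C]_n.+1.
Hypothesis qS : quantum_graph S.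
Hypothesis P_proj : forall i, nontrivial_projection (P i).
Hypothesis P_orth : forall i j, i != j -> P i *m P j = 0.
Hypothesis P_sum : \sum_(i < m) P i = 1%:M.

Let Padj i : mxadj (P i) = P i. Proof. by case: (P_proj i) => [[]]. Qed.

Lemma cut_blocks_cent (K : {set 'I_m}) :
  (forall i j, i \in K -> j \notin K -> compress (P j) S (P i) == 0%VS) ->
  (S <= 'C[(\sum_(i in K) P i)%R])%VS.
Proof.
move=> cut0; have [_ Sadj] := qS; set Q := \sum_(i in K) P i.
(* Q S (I - Q) = 0 and its adjoint (I - Q) S Q = 0 give Q A = Q A Q = A Q. *)
have Qadj : mxadj Q = Q by rewrite raddf_sum; apply: eq_bigr => i _; apply: Padj.
have QCadj : mxadj (1%:M - Q) = 1%:M - Q by rewrite raddfB /= mxadj1 Qadj.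
have QC : 1%:M - Q = \sum_(j in ~: K) P j.
  rewrite -P_sum (bigID (mem K)) /= addrAC subrr add0r.
  by apply: eq_bigl => j; rewrite inE.
have QSQC X : X \in S -> Q *m X *m (1%:M - Q) = 0.
  move=> XS; rewrite QC mulmx_sumr big1 // => j; rewrite inE => jK.
  rewrite mulmx_suml mulmx_suml big1 // => i iK.
  have /compress_adj_eq0 PSP := cut0 i j iK jK.
  exact: (compress_eq0P _ _ _ (PSP Sadj (Padj j) (Padj i))).
have QCSQ X : X \in S -> (1%:M - Q) *m X *m Q = 0.
  by move=> XS; rewrite -[X]mxadjK -QCadj -{2}Qadj -!mxadjM mulmxA QSQC ?raddf0 ?Sadj.
apply/subvP => A AS; apply/cent1vP; rewrite -!mulmxE.
move/eqP: (QSQC A AS); rewrite mulmxBr mulmx1 subr_eq0 => /eqP ->.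
by move/eqP: (QCSQ A AS); rewrite !mulmxBl mul1mx subr_eq0 => /eqP.
Qed.

Lemma qconnected_cut_edge : qconnected S ->
  forall K : {set 'I_m}, K != set0 -> K != setT ->
  exists2 i, i \in K & exists2 j, j \notin K & compress (P j) S (P i) != 0%VS.
Proof.
move=> conn K K0 KT.
have [/existsP[i /andP[iK /existsP[j /andP[jK PSP]]]] | /existsPn cut0] :=
  boolP [exists i in K, exists j in ~: K, compress (P j) S (P i) != 0%VS].
  by exists i => //; exists j; rewrite -?in_setC.
have /cut_blocks_cent /agenv_cent1 : forall i j, i \in K -> j \notin K ->
    compress (P j) S (P i) == 0%VS.
  move=> i j iK jK; move: (cut0 i); rewrite iK => /existsPn/(_ j).
  by rewrite in_setC jK negbK.
have [S1 _] := qS; rewrite ((qconnectedE S1).1 conn) => /subvP Qcent.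
set Q := \sum_(i in K) P i in Qcent.
have [i0 i0K] := set0Pn _ K0.
have /properP[_ [j0 _ j0K]] : K \proper setT by rewrite properT.
have PQ : P i0 *m Q = P i0.
  rewrite mulmx_sumr (bigD1 i0) //= big1 ?addr0 => [|i /andP[_ ii0]].
    by case: (P_proj i0) => [[]].
  by rewrite P_orth // eq_sym.
have QP : Q *m P j0 = 0.
  by rewrite mulmx_suml big1 // => i iK; rewrite P_orth //; apply: contraNneq j0K => <-.
have [[_ [Pi0 _]] [_ [Pj0 _]]] := (P_proj i0, P_proj j0).
have [Y] := mulmx_sandwich_neq0 (introN eqP Pi0) (introN eqP Pj0).
have /cent1vP := Qcent Y (memvf Y); rewrite -!mulmxE => QY.
by rewrite -PQ -(mulmxA (P i0)) -QY -!mulmxA QP !mulmx0 eqxx.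
Qed.

Lemma qconnected_cut_bound : qconnected S ->
  (2 * (m - 1) <= \sum_(i < m) \sum_(j < m | i != j) \dim (compress (P j) S (P i)))%N.
Proof.
move=> conn; pose r i j := compress (P j) S (P i) != 0%VS.
have r_sym : symmetric r.
  have [_ Sadj] := qS.
  by move=> i j; apply/idP/idP; apply: contra; apply: compress_adj_eq0.
apply: leq_trans (cut_connected_edges r_sym (qconnected_cut_edge conn)) _.
apply: leq_sum => i _; apply: leq_sum => j _.
by rewrite /r -dimv_eq0 -lt0n; case: (\dim _).
Qed.

End ConnectedPartition.

Section OrthogonalProjection.
Variable C : numClosedFieldType.

Lemma orthoproj_exists p n (V : 'M[C]_(p, n)) : exists Q : 'M[C]_n,
  [/\ is_projection Q, (Q <= V)%MS & forall q (X : 'M[C]_(q, n)), (X <= V)%MS -> X *m Q = X].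
Proof.
pose B := schmidt (row_base V).
have B_unitary : B *m mxadj B = 1%:M.
  by rewrite /mxadj map_trmx; apply/unitarymxP/schmidt_unitarymx/rank_leq_col.
have BV : (B :=: V)%MS.
  exact: eqmx_trans (eqmx_schmidt_free (row_base_free V)) (eq_row_base V).
exists (mxadj B *m B); split; last 2 first.
- by rewrite -BV submxMl.
- move=> q X; rewrite -BV => XB.
  by rewrite -(mulmxKpV XB) -!mulmxA (mulmxA B) B_unitary mul1mx.
split; last by rewrite mxadjM mxadjK.
by rewrite mulmxA -(mulmxA (mxadj B)) B_unitary mulmx1.
Qed.

Lemma eigenvector_in_invariant p n (V : 'M[C]_(p, n)) (M : 'M[C]_n) :
  (V *m M <= V)%MS -> V != 0 ->
  exists2 u : 'rV_n, u != 0 & exists a, (u <= V)%MS /\ u *m M = a *: u.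
Proof.
move=> VM V0; pose W := row_base V.
have WM : (W *m M <= W)%MS.
  by rewrite !eq_row_base (submx_trans _ VM) // submxMr ?eq_row_base.
have rV_gt0 : (0 < \rank V)%N by rewrite lt0n mxrank_eq0.
have [a /eigenvalueP[v vWM v0]] := eigenvalue_closed (W *m M *m pinvmx W) rV_gt0.
exists (v *m W); first by rewrite mulmx_free_eq0 ?row_base_free.
exists a; split; first by rewrite -(eq_row_base V) submxMl.
by rewrite -mulmxA -(mulmxKpV WM) mulmxA vWM scalemxAl.
Qed.

Lemma invariant_orthoproj_cent n (A : {vspace 'M[C]_n.+1}) p (V : 'M[C]_(p, n.+1)) Q :
  {in A, forall B, mxadj B \in A} -> {in A, forall B, (V *m B <= V)%MS} ->
  is_projection Q -> (Q <= V)%MS ->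
  (forall q (X : 'M[C]_(q, n.+1)), (X <= V)%MS -> X *m Q = X) -> (A <= 'C[Q])%VS.
Proof.
move=> Aadj VA [_ Qadj] QV QV_id.
have QBQ B : B \in A -> Q *m B *m Q = Q *m B.
  by move=> BA; apply: QV_id; apply: submx_trans (VA B BA); apply: submxMr.
apply/subvP => B BA; apply/cent1vP; rewrite -!mulmxE.
have := congr1 mxadj (QBQ _ (Aadj B BA)).
by rewrite !mxadjM mxadjK Qadj mulmxA QBQ.
Qed.

End OrthogonalProjection.

Section StarAlgebra.
Variables (C : numClosedFieldType) (n : nat) (A : {vspace 'M[C]_n.+1}).
Hypothesis A1 : 1%:M \in A.
Hypothesis AM : forall B B', B \in A -> B' \in A -> B *m B' \in A.
Hypothesis Aadj : {in A, forall B, mxadj B \in A}.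

Definition orbit_mx (v : 'rV[C]_n.+1) : 'M[C]_(\dim A, n.+1) :=
  \matrix_(k < \dim A) (v *m (vbasis A)`_k).

Let vbasisA (k : 'I_(\dim A)) : (vbasis A)`_k \in A.
Proof. by rewrite -tnth_nth vbasis_mem ?mem_tnth. Qed.

Lemma orbit_mxP v w : reflect (exists2 B, B \in A & v *m B = w) (w <= orbit_mx v)%MS.
Proof.
apply: (iffP idP) => [wv | [B BA <-]].
  exists (\sum_k (w *m pinvmx (orbit_mx v)) 0 k *: (vbasis A)`_k).
    by apply: memv_suml => k _; rewrite memvZ.
  rewrite mulmx_sumr -[RHS](mulmxKpV wv) (mulmx_sum_row (w *m pinvmx _)).
  by apply: eq_bigr => k _; rewrite rowK scalemxAr.
rewrite (coord_vbasis BA) mulmx_sumr; apply: summx_sub => k _.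
rewrite -scalemxAr scalemx_sub //.
by rewrite -[X in (X <= _)%MS](rowK (fun k => v *m (vbasis A)`_k)) row_sub.
Qed.

Lemma orbit_mx_invariant v B : B \in A -> (orbit_mx v *m B <= orbit_mx v)%MS.
Proof.
move=> BA; apply/row_subP => k; rewrite row_mul rowK -mulmxA.
by apply/orbit_mxP; exists ((vbasis A)`_k *m B); rewrite ?AM.
Qed.

Section Transitive.
Hypothesis A_trans :
  forall v : 'rV[C]_n.+1, v != 0 -> forall w, exists2 B, B \in A & v *m B = w.

Lemma outer_mem_full (c : 'cV[C]_n.+1) (w : 'rV[C]_n.+1) :
  c != 0 -> w != 0 -> c *m w \in A -> A = fullv.
Proof.
move=> c0 w0 cwA.
have cA p : c *m p \in A by have [B BA <-] := A_trans w0 p; rewrite mulmxA AM.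
have outerA (q : 'cV_n.+1) p : q *m p \in A.
  have := Aadj (cA (mxadj q)); rewrite mxadjM mxadjK => qcA.
  have c'0 : mxadj c != 0 by rewrite mxadj_eq0.
  by have [B BA <-] := A_trans c'0 p; rewrite mulmxA AM.
apply/vspaceP => X; rewrite memvf (matrix_sum_delta X).
apply: memv_suml => a _; apply: memv_suml => b _.
by rewrite memvZ // -(mul_delta_mx (0 : 'I_1)) outerA.
Qed.

Lemma rank1_mem_full T : T \in A -> \rank T = 1%N -> A = fullv.
Proof.
move=> TA rT1; have T0 : T != 0 by rewrite -mxrank_eq0 rT1.
have /rowV0Pn[w wT w0] := T0.
have Tw : (T <= w)%MS.
  by have := mxrank_leqif_eq wT; rewrite rank_rV w0 rT1 => /leqif_refl/andP[].
have Tcw : T = (T *m pinvmx w) *m w by rewrite mulmxKpV.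
have c0 : T *m pinvmx w != 0 by apply: contraNneq T0 => c0; rewrite Tcw c0 mul0mx.
by apply: outer_mem_full c0 w0 _; rewrite -Tcw.
Qed.

Lemma mem_rank_drop T : T \in A -> T != 0 -> \rank T != 1%N ->
  exists2 T', T' \in A & (T' != 0) && (\rank T' < \rank T)%N.
Proof.
move=> TA T0 rT1; have /rowV0Pn[v vT v0] := T0.
have [j Tj] : exists j, ~~ (row j T <= v)%MS.
  apply/row_subPn; apply: contra rT1 => Tv.
  have := mxrankS Tv; rewrite rank_rV v0 => rT_le1.
  by rewrite eqn_leq rT_le1 lt0n mxrank_eq0.
have [B BA vB] := A_trans v0 (delta_mx 0 j).
(* B T preserves the row space of T, so it has an eigenvector u there; u kills
   B T - a, which lowers the rank, while v B T = row j T keeps T (B T - a) nonzero. *)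
have [u u0 [a [uT uBT]]] : exists2 u : 'rV_n.+1, u != 0 &
    exists a, (u <= T)%MS /\ u *m (B *m T) = a *: u.
  by apply: eigenvector_in_invariant => //; rewrite mulmxA submxMl.
exists (T *m (B *m T - a%:M)).
  by rewrite mulmxBr mul_mx_scalar memvB ?memvZ // mulmxA AM ?AM.
apply/andP; split.
  apply: contra Tj => /eqP T'0.
  have : v *m (B *m T - a%:M) = 0 by rewrite -(mulmxKpV vT) -mulmxA T'0 mulmx0.
  rewrite mulmxBr mulmxA vB -rowE mul_mx_scalar => /eqP.
  by rewrite subr_eq0 => /eqP ->; rewrite scalemx_sub.
rewrite -(mxrank_mul_ker T (B *m T - a%:M)) -[X in (X < _)%N]addn0 ltn_add2l.
rewrite lt0n mxrank_eq0.
apply: contraNneq u0 => cap0; rewrite -submx0 -cap0 sub_capmx uT.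
by apply/sub_kermxP; rewrite mulmxBr mul_mx_scalar uBT subrr.
Qed.

Lemma transitive_full : A = fullv.
Proof.
suff rank_ind k T : T \in A -> T != 0 -> (\rank T <= k)%N -> A = fullv.
  by apply: (rank_ind n.+1 1%:M A1); rewrite ?rank_leq_row // -mxrank_eq0 mxrank1.
elim: k T => [|k IHk] T TA T0 rTk; first by move: T0; rewrite -mxrank_eq0 -leqn0 rTk.
have [/(rank1_mem_full TA) // | rT1] := eqVneq (\rank T) 1%N.
have [T' T'A /andP[T'0 rT'T]] := mem_rank_drop TA T0 rT1.
by apply: (IHk T') => //; rewrite -ltnS (leq_trans rT'T).
Qed.

End Transitive.

Lemma proper_cent_projection : A != fullv ->
  exists Q, nontrivial_projection Q /\ (A <= 'C[Q])%VS.
Proof.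
move=> A_proper.
have [v v0 v_proper] : exists2 v : 'rV[C]_n.+1, v != 0 & ~~ (1%:M <= orbit_mx v)%MS.
  apply: NNPP => transA; move/eqP: A_proper; apply; apply: transitive_full => v v0 w.
  apply/orbit_mxP/(submx_trans (submx1 w)); apply/negPn/negP => v_proper.
  by apply: transA; exists v.
have [Q [Qproj QV QV_id]] := orthoproj_exists (orbit_mx v).
exists Q; split; last first.
  by apply: invariant_orthoproj_cent Qproj QV QV_id => // B; apply: orbit_mx_invariant.
split=> //; split=> [Q0 | Q1].
  have : (v <= orbit_mx v)%MS by apply/orbit_mxP; exists 1%:M; rewrite ?mulmx1.
  by move/QV_id; rewrite Q0 mulmx0 => /esym/eqP; rewrite (negbTE v0).
by move: v_proper; rewrite -Q1 QV.
Qed.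

End StarAlgebra.

Section DisconnectedPartition.
Variables (C : numClosedFieldType) (n : nat) (S : {vspace 'M[C]_n.+1}).
Hypothesis qS : quantum_graph S.

Lemma disconnected_cent_projection : agenv S != fullv ->
  exists Q, nontrivial_projection Q /\ (S <= 'C[Q])%VS.
Proof.
have [S1 Sadj] := qS; move=> S_proper.
have A1 : 1%:M \in agenv S by rewrite memvE sub1_agenv.
have AM B B' : B \in agenv S -> B' \in agenv S -> B *m B' \in agenv S.
  by rewrite mulmxE; apply: memvM.
have Aadj : {in agenv S, forall B, mxadj B \in agenv S}.
  by rewrite agenv_expv //; apply: expv_adj.
have [Q [Qproj SQ]] := proper_cent_projection A1 AM Aadj S_proper.
by exists Q; split; last by apply: subv_trans SQ; apply: sub_agenv.
Qed.

Lemma cent_projection_partition Q : nontrivial_projection Q -> (S <= 'C[Q])%VS ->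
  exists P : 'I_2 -> 'M[C]_n.+1, [/\ forall i, nontrivial_projection (P i),
    forall i j, i != j -> P i *m P j = 0, \sum_(i < 2) P i = 1%:M &
    forall i j, i != j -> compress (P j) S (P i) = 0%VS].
Proof.
move=> [[QQ Qadj] [Q0 Q1]] SQ.
have QA A : A \in S -> A *m Q = Q *m A.
  by move=> AS; have /cent1vP := subvP SQ A AS; rewrite -!mulmxE.
exists (fun i => if i == ord0 then Q else 1%:M - Q); split.
- case=> [[|[|//]] ?] /=; first by [].
  split; first exact: projectionN1.
  split=> [QC0 | QC1]; [apply: Q1 | apply: Q0].
    by rewrite -[Q](subKr 1%:M) QC0 subr0.
  by rewrite -[Q](subKr 1%:M) QC1 subrr.
- move=> [[|[|//]] ?] [[|[|//]] ?] //= _.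
    by rewrite mulmxBr mulmx1 QQ subrr.
  by rewrite mulmxBl mul1mx QQ subrr.
- by rewrite big_ord_recl big_ord1 /= addrC subrK.
move=> [[|[|//]] ?] [[|[|//]] ?] //= _; apply/eqP/compress_eq0P => A AS.
  by rewrite !mulmxBl mul1mx -mulmxA QA // mulmxA QQ subrr.
by rewrite mulmxBr mulmx1 -mulmxA QA // mulmxA QQ subrr.
Qed.

End DisconnectedPartition.

Unset Implicit Arguments.

Theorem theorem3p5 (R : realType) (n : nat) (S : {vspace 'M[R[i]]_n.+1}) :
  quantum_graph S ->
  (qconnected S <->
   forall (m : nat) (P : 'I_m -> 'M[R[i]]_n.+1),
     (forall i, nontrivial_projection (P i)) ->
     (forall i j, i != j -> P i *m P j = 0) ->
     \sum_(i < m) P i = 1%:M ->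
     (2 * (m - 1) <= \sum_(i < m) \sum_(j < m | i != j) \dim (compress (P j) S (P i)))%N).
Proof.
move=> qS; split=> [conn m P P_proj P_orth P_sum | cut_bound].
  exact: qconnected_cut_bound.
have [S1 _] := qS; apply/(qconnectedE S1)/eqP; apply: contraT => S_proper.
have [Q [Qproj SQ]] := disconnected_cent_projection qS S_proper.
have [P [P_proj P_orth P_sum P_cut]] := cent_projection_partition Qproj SQ.
have := cut_bound 2 P P_proj P_orth P_sum.
by rewrite big1 // => i _; rewrite big1 // => j ij; rewrite P_cut ?dimv0.
Qed.
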